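(* Let $E$ be a disjoint combination of $E_1,\dots,E_n$ and fix $i$. If $M$ is a quasi-$E_i$ term and $M\to^*_{R_E}N$, then $N$ is a quasi-$E_i$ term and $F_{E_i}(M)\to^*_{R_E}F_{E_i}(N)$.
   Context: Fix names, variables, and constructors $\mathsf{pub},\mathsf{sign},\mathsf{blind},\langle\cdot,\cdot\rangle,\{\cdot\}_\cdot$. $E_1,\dots,E_n$ are equational theories with pairwise disjoint signatures $\Sigma_{E_i}$ (disjoint from the constructors), each containing at most one associative-commutative (AC) binary symbol $\oplus_i$ and each AC-convergent; $E$ is their union, presented by the rewrite system $R_E$ (the union of the individual rewrite systems) which is terminating and confluent modulo AC of all $\oplus_i$; $\to_{R_E}$ is one rewrite step modulo AC, $\to^*_{R_E}$ its reflexive-transitive closure; $\approx_E$ is equality modulo $E$. Terms are built from names, variables, the constructors and symbols of $\Sigma_E=\bigcup_i\Sigma_{E_i}$. A term is $E_i$-alien if its head symbol is not in $\Sigma_{E_i}$. A term $M$ is a quasi-$E_i$ term if every $E_i$-alien subterm of $M$ is in $E$-normal form. Fix a function $v_E$ assigning to each ground term a variable such that $v_E(M)=v_E(N)$ iff $M\approx_E N$. The $E_i$ abstraction function $F_{E_i}$ on ground terms is defined by: $F_{E_i}(u)=u$ if $u$ is a name; $F_{E_i}(g(u_1,\dots,u_k))=g(F_{E_i}(u_1),\dots,F_{E_i}(u_k))$ if $g\in\Sigma_{E_i}$; $F_{E_i}(u)=v_E(u)$ otherwise. *)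

From Stdlib Require Import List Relations Arith.
Import ListNotations.
Set Implicit Arguments.

(* Each symbol f : Sy belongs
   to exactly one theory, namely E_(th f): this encodes pairwise disjointness. *)
Inductive term (Sy : Type) : Type :=
| TName  : nat -> term Sy
| TVar   : nat -> term Sy
| TPub   : term Sy -> term Sy
| TSign  : term Sy -> term Sy -> term Sy
| TBlind : term Sy -> term Sy -> term Sy
| TPair  : term Sy -> term Sy -> term Sy
| TEnc   : term Sy -> term Sy -> term Sy      (* {m}_k = TEnc m k *)
| TApp   : Sy -> list (term Sy) -> term Sy.
Arguments TName {Sy}. Arguments TVar {Sy}.

Inductive subterm {Sy} : term Sy -> term Sy -> Prop :=
| st_refl t : subterm t t
| st_pub u t : subterm u t -> subterm u (TPub t)
| st_sign1 u t1 t2 : subterm u t1 -> subterm u (TSign t1 t2)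
| st_sign2 u t1 t2 : subterm u t2 -> subterm u (TSign t1 t2)
| st_blind1 u t1 t2 : subterm u t1 -> subterm u (TBlind t1 t2)
| st_blind2 u t1 t2 : subterm u t2 -> subterm u (TBlind t1 t2)
| st_pair1 u t1 t2 : subterm u t1 -> subterm u (TPair t1 t2)
| st_pair2 u t1 t2 : subterm u t2 -> subterm u (TPair t1 t2)
| st_enc1 u t1 t2 : subterm u t1 -> subterm u (TEnc t1 t2)
| st_enc2 u t1 t2 : subterm u t2 -> subterm u (TEnc t1 t2)
| st_app u f l t : In t l -> subterm u t -> subterm u (TApp f l).

Inductive ctx {Sy} (r : term Sy -> term Sy -> Prop) : term Sy -> term Sy -> Prop :=
| ctx_base s t : r s t -> ctx r s t
| ctx_pub s t : ctx r s t -> ctx r (TPub s) (TPub t)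
| ctx_sign1 s t u : ctx r s t -> ctx r (TSign s u) (TSign t u)
| ctx_sign2 s t u : ctx r s t -> ctx r (TSign u s) (TSign u t)
| ctx_blind1 s t u : ctx r s t -> ctx r (TBlind s u) (TBlind t u)
| ctx_blind2 s t u : ctx r s t -> ctx r (TBlind u s) (TBlind u t)
| ctx_pair1 s t u : ctx r s t -> ctx r (TPair s u) (TPair t u)
| ctx_pair2 s t u : ctx r s t -> ctx r (TPair u s) (TPair u t)
| ctx_enc1 s t u : ctx r s t -> ctx r (TEnc s u) (TEnc t u)
| ctx_enc2 s t u : ctx r s t -> ctx r (TEnc u s) (TEnc u t)
| ctx_app f l1 l2 s t : ctx r s t -> ctx r (TApp f (l1 ++ s :: l2)) (TApp f (l1 ++ t :: l2)).

Fixpoint subst {Sy} (sg : nat -> term Sy) (t : term Sy) : term Sy :=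
  match t with
  | TName a => TName a
  | TVar x => sg x
  | TPub u => TPub (subst sg u)
  | TSign u v => TSign (subst sg u) (subst sg v)
  | TBlind u v => TBlind (subst sg u) (subst sg v)
  | TPair u v => TPair (subst sg u) (subst sg v)
  | TEnc u v => TEnc (subst sg u) (subst sg v)
  | TApp f l => TApp f (map (subst sg) l)
  end.

Inductive ac_ax {Sy} (isAC : Sy -> Prop) : term Sy -> term Sy -> Prop :=
| ac_comm f a b : isAC f -> ac_ax isAC (TApp f [a; b]) (TApp f [b; a])
| ac_assoc f a b c : isAC f ->
    ac_ax isAC (TApp f [a; TApp f [b; c]]) (TApp f [TApp f [a; b]; c]).

Definition ac_eq {Sy} (isAC : Sy -> Prop) : term Sy -> term Sy -> Prop :=
  clos_refl_sym_trans _ (ctx (ac_ax isAC)).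

Record rule (Sy : Type) := Rule { lhs : term Sy; rhs : term Sy }.

Definition rule_inst {Sy} (R : rule Sy -> Prop) (s t : term Sy) : Prop :=
  exists r sg, R r /\ s = subst sg (lhs r) /\ t = subst sg (rhs r).

Definition step_mod {Sy} (R : rule Sy -> Prop) (isAC : Sy -> Prop) (M N : term Sy) : Prop :=
  exists M' N', ac_eq isAC M M' /\ ctx (rule_inst R) M' N' /\ ac_eq isAC N' N.

Definition steps {Sy} (R : rule Sy -> Prop) (isAC : Sy -> Prop) : term Sy -> term Sy -> Prop :=
  clos_refl_trans _ (step_mod R isAC).

Definition normal {Sy} (R : rule Sy -> Prop) (isAC : Sy -> Prop) (t : term Sy) : Prop :=
  ~ exists u, step_mod R isAC t u.

Definition eq_theory {Sy} (R : rule Sy -> Prop) (isAC : Sy -> Prop) : term Sy -> term Sy -> Prop :=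
  clos_refl_sym_trans _ (fun s t => step_mod R isAC s t \/ ctx (ac_ax isAC) s t).

Definition terminating_on {Sy} (P : term Sy -> Prop) (st : term Sy -> term Sy -> Prop) : Prop :=
  ~ exists sq : nat -> term Sy, P (sq 0) /\ forall k, st (sq k) (sq (S k)).

Definition confluent_mod_on {Sy} (P : term Sy -> Prop) (st eqv : term Sy -> term Sy -> Prop) : Prop :=
  forall t1 t2 u1 u2, P t1 -> P t2 -> eqv t1 t2 ->
    clos_refl_trans _ st t1 u1 -> clos_refl_trans _ st t2 u2 ->
    exists v1 v2, clos_refl_trans _ st u1 v1 /\ clos_refl_trans _ st u2 v2 /\ eqv v1 v2.

Definition pure {Sy} (th : Sy -> nat) (j : nat) (t : term Sy) : Prop :=
  forall u, subterm u t -> (exists x, u = TVar x) \/ (exists f l, u = TApp f l /\ th f = j).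

Definition ground {Sy} (t : term Sy) : Prop := forall x, ~ subterm (TVar x) t.

Definition isAC_j {Sy} (ac : nat -> option Sy) (j : nat) (f : Sy) : Prop := ac j = Some f.
Definition isAC_E {Sy} (n : nat) (ac : nat -> option Sy) (f : Sy) : Prop :=
  exists j, j < n /\ ac j = Some f.
Definition R_E {Sy} (n : nat) (R : nat -> rule Sy -> Prop) (r : rule Sy) : Prop :=
  exists j, j < n /\ R j r.

(* E is the disjoint combination of E_0..E_(n-1): E_j is presented by the
   rewrite system R j (over Sigma_{E_j}) together with AC of its (at most one)
   AC symbol ac j, each E_j is AC-convergent, and R_E is terminating and
   confluent modulo AC. *)
Definition disjoint_combination {Sy} (n : nat) (th : Sy -> nat)
    (ac : nat -> option Sy) (R : nat -> rule Sy -> Prop) : Prop :=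
  (forall f, th f < n) /\
  (forall j f, ac j = Some f -> j < n /\ th f = j) /\
  (forall j r, R j r ->
     j < n /\ pure th j (lhs r) /\ pure th j (rhs r) /\
     (forall x, lhs r <> TVar x) /\
     (forall x, subterm (TVar x) (rhs r) -> subterm (TVar x) (lhs r))) /\
  (forall j, j < n ->
     terminating_on (pure th j) (step_mod (R j) (isAC_j ac j)) /\
     confluent_mod_on (pure th j) (step_mod (R j) (isAC_j ac j)) (ac_eq (isAC_j ac j))) /\
  terminating_on (fun _ => True) (step_mod (R_E n R) (isAC_E n ac)) /\
  confluent_mod_on (fun _ => True) (step_mod (R_E n R) (isAC_E n ac)) (ac_eq (isAC_E n ac)).

Definition vE_spec {Sy} (n : nat) (ac : nat -> option Sy) (R : nat -> rule Sy -> Prop)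
    (vE : term Sy -> nat) : Prop :=
  forall M N, ground M -> ground N ->
    (vE M = vE N <-> eq_theory (R_E n R) (isAC_E n ac) M N).

Definition alien {Sy} (th : Sy -> nat) (i : nat) (t : term Sy) : Prop :=
  ~ exists f l, t = TApp f l /\ th f = i.

Definition quasi {Sy} (n : nat) (th : Sy -> nat) (ac : nat -> option Sy)
    (R : nat -> rule Sy -> Prop) (i : nat) (M : term Sy) : Prop :=
  forall u, subterm u M -> alien th i u -> normal (R_E n R) (isAC_E n ac) u.

Fixpoint absF {Sy} (th : Sy -> nat) (i : nat) (vE : term Sy -> nat) (t : term Sy) : term Sy :=
  match t with
  | TName a => TName a
  | TApp f l => if Nat.eqb (th f) i then TApp f (map (absF th i vE) l) else TVar (vE t)
  | _ => TVar (vE t)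
  end.

(* An E_i-alien subterm of a quasi-E_i term is E-irreducible, so every rewrite
   step on such a term takes place in its top E_i-layer.  There, the rule used
   must be a rule of E_i, since its left-hand side is headed by an E_i symbol;
   instantiating a pure E_i rule commutes with F_{E_i}, and the substitution
   only copies alien subterms that were already present, hence in normal form.
   The AC steps of rewriting modulo AC either stay in the E_i-layer, where
   F_{E_i} maps them to AC steps, or relate two E-equal ground aliens, which
   v_E sends to the same variable. *)

From Stdlib Require Import List Relations Arith.
Import ListNotations.
Set Implicit Arguments.

#[local] Hint Constructors subterm : core.

Section Terms.
Variable Sy : Type.
Implicit Types (s t u : term Sy) (l : list (term Sy)).

Definition term_nested_ind (P : term Sy -> Prop)
  (Hn : forall a, P (TName a)) (Hv : forall x, P (TVar x))
  (Hp : forall t, P t -> P (TPub t))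
  (Hs : forall a b, P a -> P b -> P (TSign a b))
  (Hb : forall a b, P a -> P b -> P (TBlind a b))
  (Hpr : forall a b, P a -> P b -> P (TPair a b))
  (He : forall a b, P a -> P b -> P (TEnc a b))
  (Ha : forall f l, Forall P l -> P (TApp f l)) : forall t, P t :=
  fix F t := match t with
  | TName a => Hn a | TVar x => Hv x | TPub u => Hp u (F u)
  | TSign a b => Hs a b (F a) (F b) | TBlind a b => Hb a b (F a) (F b)
  | TPair a b => Hpr a b (F a) (F b) | TEnc a b => He a b (F a) (F b)
  | TApp f l => Ha f l ((fix G l := match l return Forall P l with
       | [] => Forall_nil _ | x :: l' => @Forall_cons _ P x l' (F x) (G l') end) l)
  end.

Lemma subterm_trans s t u : subterm s t -> subterm t u -> subterm s u.
Proof. intros Hst Htu; induction Htu; eauto. Qed.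

Lemma subterm_subst_var sg x t : subterm (TVar x) t -> subterm (sg x) (subst sg t).
Proof.
  intros H; remember (TVar x) as v eqn:E; induction H; subst; simpl; eauto.
  eapply st_app; [apply in_map|]; eauto.
Qed.

Lemma subterm_subst_inv sg u t : subterm u (subst sg t) ->
  (exists x, subterm (TVar x) t /\ subterm u (sg x)) \/
  (exists t', subterm t' t /\ u = subst sg t' /\ forall x, t' <> TVar x).
Proof.
  revert u; induction t as [a|x|t IH|a b IHa IHb|a b IHa IHb|a b IHa IHb|a b IHa IHb|f l IH]
    using term_nested_ind; intros u H; simpl in H.
  all: try (inversion H; subst; right; exists (TName a); repeat split; auto; discriminate).
  { left; exists x; auto. }
  all: inversion H; subst;
    try (right; eexists; split; [apply st_refl | split; [reflexivity | discriminate]]).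
  all: repeat match goal with
    | IH : forall u, subterm u (subst ?g ?a) -> _, Hs : subterm _ (subst ?g ?a) |- _ =>
        destruct (IH _ Hs) as [[y [? ?]]|[t' [? [? ?]]]]; clear IH;
        [left; exists y | right; exists t']; eauto
    end.
  match goal with Hin : In _ (map _ _), Hs : subterm u _ |- _ =>
    apply in_map_iff in Hin as [a [<- Ha]]; rewrite Forall_forall in IH;
    destruct (IH a Ha _ Hs) as [[y [? ?]]|[t' [? [? ?]]]];
      [left; exists y | right; exists t']; eauto
  end.
Qed.

Lemma ground_subterm s t : subterm s t -> ground t -> ground s.
Proof. intros H G x Hx; apply (G x); eapply subterm_trans; eauto. Qed.

Definition context_closed (C : term Sy -> term Sy) : Prop :=
  forall r s t, ctx r s t -> ctx r (C s) (C t).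

Lemma context_closed_app f l1 l2 : context_closed (fun x => TApp f (l1 ++ x :: l2)).
Proof. intros r s t H; apply ctx_app, H. Qed.

Lemma subterm_context u t : subterm u t -> exists C, context_closed C /\ t = C u.
Proof.
  induction 1 as [t| | | | | | | | | |u f l t Hin _ [C [HC ->]]];
    try destruct IHsubterm as [C [HC ->]].
  - exists (fun x => x); split; [intros ???; auto | reflexivity].
  - exists (fun x => TPub (C x)); split; [intros ????; apply ctx_pub; auto | reflexivity].
  - exists (fun x => TSign (C x) t2); split; [intros ????; apply ctx_sign1; auto | reflexivity].
  - exists (fun x => TSign t1 (C x)); split; [intros ????; apply ctx_sign2; auto | reflexivity].
  - exists (fun x => TBlind (C x) t2); split; [intros ????; apply ctx_blind1; auto | reflexivity].
  - exists (fun x => TBlind t1 (C x)); split; [intros ????; apply ctx_blind2; auto | reflexivity].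
  - exists (fun x => TPair (C x) t2); split; [intros ????; apply ctx_pair1; auto | reflexivity].
  - exists (fun x => TPair t1 (C x)); split; [intros ????; apply ctx_pair2; auto | reflexivity].
  - exists (fun x => TEnc (C x) t2); split; [intros ????; apply ctx_enc1; auto | reflexivity].
  - exists (fun x => TEnc t1 (C x)); split; [intros ????; apply ctx_enc2; auto | reflexivity].
  - apply in_split in Hin as [l1 [l2 ->]].
    exists (fun x => TApp f (l1 ++ C x :: l2)); split; [|reflexivity].
    intros r s t H; apply context_closed_app, HC, H.
Qed.

Lemma ctx_vars_incl r :
  (forall s t x, r s t -> subterm (TVar x) t -> subterm (TVar x) s) ->
  forall s t x, ctx r s t -> subterm (TVar x) t -> subterm (TVar x) s.
Proof.
  intros Hr s t x H; induction H as [| | | | | | | | | |f l1 l2 s t _ IH];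
    intros Hx; eauto; inversion Hx; subst; eauto.
  match goal with Hin : In ?v (l1 ++ t :: l2) |- _ =>
    apply in_app_or in Hin as [Hin|[<-|Hin]];
    [apply st_app with v | apply st_app with s | apply st_app with v];
    auto using in_or_app, in_eq, in_cons end.
Qed.

Lemma ctx_flip r s t : ctx r s t -> ctx (fun a b => r b a) t s.
Proof. induction 1; constructor; assumption. Qed.

Lemma ground_ctx r :
  (forall s t x, r s t -> subterm (TVar x) t -> subterm (TVar x) s) ->
  forall s t, ctx r s t -> ground s -> ground t.
Proof. intros Hr s t H G x Hx; apply (G x); eapply ctx_vars_incl; eauto. Qed.

Lemma clos_rst_iff A (step : A -> A -> Prop) (P : A -> Prop) :
  (forall a b, step a b -> (P a <-> P b)) ->
  forall a b, clos_refl_sym_trans A step a b -> (P a <-> P b).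
Proof. intros H a b Hab; induction Hab; firstorder. Qed.

Section Rewriting.
Variables (Rl : rule Sy -> Prop) (isAC : Sy -> Prop).

Lemma ac_eq_context C s t : context_closed C -> ac_eq isAC s t -> ac_eq isAC (C s) (C t).
Proof.
  intros HC H; induction H.
  - apply rst_step, HC; assumption.
  - apply rst_refl.
  - apply rst_sym; assumption.
  - eapply rst_trans; eassumption.
Qed.

Lemma step_mod_context C s t :
  context_closed C -> step_mod Rl isAC s t -> step_mod Rl isAC (C s) (C t).
Proof.
  intros HC [s' [t' [H1 [H2 H3]]]]; exists (C s'), (C t');
  auto using ac_eq_context.
Qed.

Lemma normal_ac_eq s t : ac_eq isAC s t -> normal Rl isAC s -> normal Rl isAC t.
Proof.
  intros H Ns [u [s' [t' [H1 H2]]]]; apply Ns; exists u, s', t'.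
  split; [eapply rst_trans|]; eauto.
Qed.

Lemma normal_subterm u t : subterm u t -> normal Rl isAC t -> normal Rl isAC u.
Proof.
  intros H Nt [u' Hu]; destruct (subterm_context H) as [C [HC ->]].
  apply Nt; exists (C u'); apply step_mod_context; assumption.
Qed.

Lemma normal_irreducible s t : normal Rl isAC s -> ~ ctx (rule_inst Rl) s t.
Proof.
  intros Ns H; apply Ns; exists t, s, t.
  split; [apply rst_refl | split; [exact H | apply rst_refl]].
Qed.

Lemma ac_ax_vars s t x : ac_ax isAC s t -> (subterm (TVar x) s <-> subterm (TVar x) t).
Proof.
  intros [f a b _|f a b c _]; split; intros Hx; inversion Hx; subst;
    repeat match goal with
    | H : In _ (_ :: _) |- _ => destruct H as [<-|H]
    | H : In _ [] |- _ => destruct H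
    | H : subterm _ (TApp _ _) |- _ => inversion H; subst; clear H
    end; eauto 6 using in_eq, in_cons.
Qed.

Lemma ground_ac_eq s t : ac_eq isAC s t -> (ground s <-> ground t).
Proof.
  apply clos_rst_iff; intros a b H; split.
  - apply (ground_ctx (r := ac_ax isAC)); [|exact H].
    intros ?? x Hst; apply (ac_ax_vars x Hst).
  - apply (ground_ctx (r := fun s t => ac_ax isAC t s)); [|exact (ctx_flip H)].
    intros ?? x Hts; apply (ac_ax_vars x Hts).
Qed.

Hypothesis rules_vars_incl :
  forall r x, Rl r -> subterm (TVar x) (rhs r) -> subterm (TVar x) (lhs r).

Lemma rule_inst_vars s t x : rule_inst Rl s t -> subterm (TVar x) t -> subterm (TVar x) s.
Proof.
  intros [r [sg [Hr [-> ->]]]] Hx.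
  destruct (subterm_subst_inv sg _ Hx) as [[y [Hy Hxy]]|[t' [_ [E Hnv]]]].
  - eapply subterm_trans; [exact Hxy|]; apply subterm_subst_var; auto.
  - destruct t'; try discriminate; exfalso; eapply Hnv; reflexivity.
Qed.

Lemma ground_step_mod s t : step_mod Rl isAC s t -> ground s -> ground t.
Proof.
  intros [s' [t' [H1 [H2 H3]]]] G.
  apply (ground_ac_eq H3), (ground_ctx rule_inst_vars H2), (ground_ac_eq H1), G.
Qed.

Lemma ground_steps s t : steps Rl isAC s t -> ground s -> ground t.
Proof. induction 1; eauto using ground_step_mod. Qed.

End Rewriting.
End Terms.

Section Abstraction.
Variables (Sy : Type) (th : Sy -> nat) (i : nat).
Implicit Types (s t u : term Sy) (l : list (term Sy)).

Definition abstracted t : Prop := alien th i t /\ forall a, t <> TName a.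

Lemma alien_app f l : th f <> i -> alien th i (TApp f l).
Proof. intros Hf [g [l' [E Hg]]]; injection E as -> ->; auto. Qed.

Lemma absF_abstracted vE t : abstracted t -> absF th i vE t = TVar (vE t).
Proof.
  intros [Ht Hnn]; destruct t as [a| | | | | | |f l]; simpl; auto.
  - exfalso; eapply Hnn; reflexivity.
  - destruct (Nat.eqb_spec (th f) i); auto.
    exfalso; apply Ht; eauto.
Qed.

Lemma absF_app_ctx vE f l1 l2 t : th f = i ->
  absF th i vE (TApp f (l1 ++ t :: l2)) =
  TApp f (map (absF th i vE) l1 ++ absF th i vE t :: map (absF th i vE) l2).
Proof. intros Hf; simpl; rewrite Hf, Nat.eqb_refl, map_app; reflexivity. Qed.

Lemma absF_subst_pure vE sg t : pure th i t ->
  absF th i vE (subst sg t) = subst (fun x => absF th i vE (sg x)) t.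
Proof.
  induction t as [| | | | | | |f l IH] using term_nested_ind; intros P; auto;
    destruct (P _ (st_refl _)) as [[x E]|[g [l' [E Hg]]]]; try discriminate.
  injection E as <- <-; simpl; rewrite Hg, Nat.eqb_refl; f_equal.
  rewrite map_map; apply map_ext_in; intros a Ha.
  rewrite Forall_forall in IH; apply IH; auto.
  intros u Hu; apply P; eauto.
Qed.

Lemma ctx_ind_abstracted (r : term Sy -> term Sy -> Prop) (P : term Sy -> term Sy -> Prop) :
  (forall s t, r s t -> P s t) ->
  (forall s t, abstracted s -> abstracted t -> ctx r s t -> P s t) ->
  (forall f l1 l2 s t, th f = i -> ctx r s t -> P s t ->
     P (TApp f (l1 ++ s :: l2)) (TApp f (l1 ++ t :: l2))) ->
  forall s t, ctx r s t -> P s t.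
Proof.
  intros Hroot Habs Happ s t H; induction H as [| | | | | | | | | |f l1 l2 s t H IH]; auto.
  all: try (apply Habs; [split; [intros (?&?&?&?); discriminate | discriminate]
                       | split; [intros (?&?&?&?); discriminate | discriminate]
                       | constructor; assumption]).
  destruct (Nat.eq_dec (th f) i) as [e|e]; auto.
  apply Habs; [split; [apply alien_app; auto | discriminate]
              | split; [apply alien_app; auto | discriminate]
              | apply ctx_app; assumption].
Qed.

End Abstraction.

Section QuasiTerms.
Variables (Sy : Type) (n : nat) (th : Sy -> nat) (ac : nat -> option Sy)
  (R : nat -> rule Sy -> Prop) (vE : term Sy -> nat) (i : nat).
Hypothesis rule_lhs_pure : forall j r, R j r -> pure th j (lhs r).
Hypothesis rule_rhs_pure : forall j r, R j r -> pure th j (rhs r).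
Hypothesis rule_lhs_not_var : forall j r x, R j r -> lhs r <> TVar x.
Hypothesis rule_vars_incl :
  forall j r x, R j r -> subterm (TVar x) (rhs r) -> subterm (TVar x) (lhs r).
Hypothesis vE_correct : vE_spec n ac R vE.

Implicit Types (s t u : term Sy) (l : list (term Sy)).
Local Notation AC := (ac_eq (isAC_E n ac)).
Local Notation step := (step_mod (R_E n R) (isAC_E n ac)).
Local Notation normalE := (normal (R_E n R) (isAC_E n ac)).
Local Notation Q := (quasi n th ac R i).
Local Notation rule_step := (ctx (rule_inst (R_E n R))).
Local Notation ac_step := (ctx (ac_ax (isAC_E n ac))).
Local Notation F := (absF th i vE).

Lemma R_E_vars_incl r x : R_E n R r -> subterm (TVar x) (rhs r) -> subterm (TVar x) (lhs r).
Proof. intros [j [_ Hr]]; apply (rule_vars_incl Hr). Qed.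

Lemma quasi_subterm u t : subterm u t -> Q t -> Q u.
Proof. intros H Qt v Hv; apply Qt; eapply subterm_trans; eauto. Qed.

Lemma quasi_normal t : normalE t -> Q t.
Proof. intros N u H _; eapply normal_subterm; eauto. Qed.

Lemma quasi_app f l : th f = i -> (Q (TApp f l) <-> Forall Q l).
Proof.
  intros Hf; rewrite Forall_forall; split.
  - intros Qt t Ht; eapply quasi_subterm; [apply st_app with t|]; eauto.
  - intros Hl u Hu Au; inversion Hu; subst.
    + exfalso; apply Au; eauto.
    + eapply Hl; eauto.
Qed.

Lemma quasi_app_replace f l1 l2 s t : th f = i -> (Q s -> Q t) ->
  Q (TApp f (l1 ++ s :: l2)) -> Q (TApp f (l1 ++ t :: l2)).
Proof.
  intros Hf Hst; rewrite !quasi_app, !Forall_app, !Forall_cons_iff by exact Hf; tauto.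
Qed.

Lemma quasi_alien_ac s t : alien th i s -> AC s t -> Q s -> Q t.
Proof.
  intros As H Qs; apply quasi_normal; eapply normal_ac_eq; [exact H|].
  apply Qs; auto.
Qed.

Lemma quasi_ac_step s t : ac_step s t -> (Q s <-> Q t).
Proof.
  revert s t; apply ctx_ind_abstracted with th i.
  - intros s t H; destruct H as [f a b c|f a b c d];
      destruct (Nat.eq_dec (th f) i) as [e|e].
    1, 3: rewrite !quasi_app, !Forall_cons_iff by exact e;
          rewrite ?quasi_app by exact e; rewrite ?Forall_cons_iff; intuition.
    all: split; apply quasi_alien_ac; auto using alien_app;
         [apply rst_step | apply rst_sym, rst_step]; do 2 constructor; assumption.
  - intros s t [As _] [At _] H; split; apply quasi_alien_ac; auto;
      [apply rst_step | apply rst_sym, rst_step]; assumption.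
  - intros f l1 l2 s t e _ IH; split; apply quasi_app_replace; tauto.
Qed.

Lemma quasi_ac_eq s t : AC s t -> (Q s <-> Q t).
Proof. apply clos_rst_iff, quasi_ac_step. Qed.

(* [v_E] identifies [E]-equal ground terms, and an AC step is an [E]-equality. *)
Lemma absF_abstracted_ac_step s t : abstracted th i s -> abstracted th i t ->
  ac_step s t -> ground s -> AC (F s) (F t).
Proof.
  intros As At H Gs.
  assert (Gt : ground t) by (apply (ground_ac_eq (rst_step _ _ _ _ H)), Gs).
  rewrite !absF_abstracted by assumption.
  rewrite (proj2 (vE_correct Gs Gt)); [apply rst_refl|].
  apply rst_step; right; exact H.
Qed.

Lemma absF_ac_step s t : ac_step s t -> ground s -> AC (F s) (F t).
Proof.
  revert s t; apply (@ctx_ind_abstracted _ th i _ (fun s t => ground s -> AC (F s) (F t))).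
  - intros s t H; destruct H as [f a b c|f a b c d];
      destruct (Nat.eq_dec (th f) i) as [e|e].
    1, 3: intros _; simpl; rewrite e, Nat.eqb_refl;
          apply rst_step, ctx_base; constructor; assumption.
    all: apply absF_abstracted_ac_step;
         [split; [apply alien_app; auto | discriminate] ..
         | apply ctx_base; constructor; assumption].
  - exact absF_abstracted_ac_step.
  - intros f l1 l2 s t e _ IH G.
    rewrite !absF_app_ctx by exact e.
    apply (ac_eq_context (C := fun x => TApp f (map F l1 ++ x :: map F l2)));
      [apply context_closed_app|].
    apply IH; eapply ground_subterm; [|exact G].
    apply st_app with s; auto using in_or_app, in_eq.
Qed.

Lemma absF_ac_eq s t : AC s t -> ground s -> AC (F s) (F t).
Proof.
  intros H; induction H as [s t H|s|s t H IH|s t u H1 IH1 H2 IH2]; intros G.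
  - apply absF_ac_step; assumption.
  - apply rst_refl.
  - apply rst_sym, IH, (ground_ac_eq H), G.
  - eapply rst_trans; [apply IH1, G | apply IH2, (ground_ac_eq H1), G].
Qed.

Lemma quasi_subst_pure sg t : pure th i t ->
  (forall x, subterm (TVar x) t -> Q (sg x)) -> Q (subst sg t).
Proof.
  intros P Hsg u Hu Au.
  destruct (subterm_subst_inv sg _ Hu) as [[x [Hx Hux]]|[t' [Ht' [-> Hnv]]]].
  - exact (Hsg x Hx u Hux Au).
  - exfalso; destruct (P _ Ht') as [[x ->]|[g [l [-> Hg]]]]; [eapply Hnv; reflexivity|].
    apply Au; simpl; eauto.
Qed.

(* The left-hand side of a rule of [E_j] is headed by an [E_j] symbol, so on a
   quasi-[E_i] term only the rules of [E_i] itself can apply at the root. *)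
Lemma quasi_rule_root s t : rule_inst (R_E n R) s t -> Q s ->
  Q t /\ rule_inst (R_E n R) (F s) (F t).
Proof.
  intros [r [sg [[j [Hj Hr]] [-> ->]]]] Qs.
  destruct (rule_lhs_pure Hr (st_refl _)) as [[x E]|[f [l [E Hf]]]];
    [exfalso; exact (rule_lhs_not_var Hr E)|].
  assert (j = i) as ->.
  { destruct (Nat.eq_dec j i) as [e|e]; auto; exfalso.
    refine (normal_irreducible (Qs _ (st_refl _) _) (t := subst sg (rhs r)) _).
    - rewrite E; apply alien_app; congruence.
    - apply ctx_base; exists r, sg; split; [exists j|]; auto. }
  split.
  - apply quasi_subst_pure; [exact (rule_rhs_pure Hr)|].
    intros x Hx; eapply quasi_subterm; [|exact Qs].
    apply subterm_subst_var, (rule_vars_incl Hr Hx).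
  - rewrite !absF_subst_pure by eauto.
    exists r, (fun x => F (sg x)); split; [exists i|]; auto.
Qed.

Lemma quasi_rule_step s t : rule_step s t -> Q s -> Q t /\ rule_step (F s) (F t).
Proof.
  revert s t; apply (@ctx_ind_abstracted _ th i _
    (fun s t => Q s -> Q t /\ rule_step (F s) (F t))).
  - intros s t H Qs; destruct (quasi_rule_root H Qs); split; [|apply ctx_base]; auto.
  - intros s t [As _] _ H Qs; exfalso.
    exact (normal_irreducible (Qs _ (st_refl _) As) H).
  - intros f l1 l2 s t e _ IH Qs.
    assert (Qs' : Q s).
    { eapply quasi_subterm; [|exact Qs]; apply st_app with s; auto using in_or_app, in_eq. }
    destruct (IH Qs') as [Qt Hst]; split.
    + apply (quasi_app_replace l1 l2 e (fun _ => Qt) Qs).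
    + rewrite !absF_app_ctx by exact e; apply ctx_app, Hst.
Qed.

Lemma quasi_step_mod s t : step s t -> Q s -> ground s -> Q t /\ step (F s) (F t).
Proof.
  intros [s' [t' [H1 [H2 H3]]]] Qs Gs.
  assert (Gs' : ground s') by apply (ground_ac_eq H1), Gs.
  destruct (quasi_rule_step H2) as [Qt' Ht']; [apply (quasi_ac_eq H1), Qs|].
  assert (Gt' : ground t') by apply (ground_ctx (rule_inst_vars R_E_vars_incl) H2), Gs'.
  split; [apply (quasi_ac_eq H3), Qt'|].
  exists (F s'), (F t'); auto using absF_ac_eq.
Qed.

Lemma quasi_steps s t : steps (R_E n R) (isAC_E n ac) s t -> Q s -> ground s ->
  Q t /\ steps (R_E n R) (isAC_E n ac) (F s) (F t).
Proof.
  intros H; induction H as [s t H|s|s t u H1 IH1 H2 IH2]; intros Qs Gs.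
  - destruct (quasi_step_mod H Qs Gs); split; [|apply rt_step]; auto.
  - split; [auto | apply rt_refl].
  - destruct (IH1 Qs Gs) as [Qt Ht].
    destruct (IH2 Qt (ground_steps R_E_vars_incl H1 Gs)) as [Qu Hu].
    split; [|eapply rt_trans]; eauto.
Qed.

End QuasiTerms.

Theorem proposition2 (Sy : Type) (n : nat) (th : Sy -> nat) (ac : nat -> option Sy)
    (R : nat -> rule Sy -> Prop) (vE : term Sy -> nat) (i : nat) (M N : term Sy) :
  disjoint_combination n th ac R ->
  vE_spec n ac R vE ->
  i < n ->
  ground M ->
  quasi n th ac R i M ->
  steps (R_E n R) (isAC_E n ac) M N ->
  quasi n th ac R i N /\
  steps (R_E n R) (isAC_E n ac) (absF th i vE M) (absF th i vE N).
Proof.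
  intros [_ [_ [HR _]]] HvE _ GM QM HMN.
  apply (quasi_steps (th := th) (R := R)); auto.
  - intros j r Hr; apply (HR j r Hr).
  - intros j r Hr; apply (HR j r Hr).
  - intros j r x Hr; apply (HR j r Hr).
  - intros j r x Hr; apply (HR j r Hr).
Qed.
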